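(* For any $\alpha\ge1$ and $\beta\ge1$, there exist a finite set $\mathcal{N}$ of $n$ agents, a finite set $\mathcal{M}$ of feasible centers, a positive integer $k$, a pseudometric $d^m$ on $\mathcal{N}$ and a function $d^c:\mathcal{N}\times\mathcal{M}\to\mathbb{R}_{\ge0}$ (a centroid metric, possibly unrelated to $d^m$) such that no clustering is both $\alpha$-FJR with respect to the centroid loss $\ell_i(C,x)=d^c(i,x)$ and $\beta$-FJR with respect to the non-centroid loss $\ell_i(C,x)=\max_{j\in C}d^m(i,j)$.
   Context: Given losses $\ell_i(C,x)\ge0$ for $i\in C\subseteq\mathcal{N}$, $x\in\mathcal{M}$: a clustering is $\mathcal{X}=\{(C_1,x_1),\dots,(C_k,x_k)\}$ with $C_t$ pairwise disjoint subsets of $\mathcal{N}$ (some possibly empty), union $\mathcal{N}$, $x_t\in\mathcal{M}$; $\ell_i(\mathcal{X})=\ell_i(C_t,x_t)$ where $i\in C_t$. For $\alpha\ge1$, $\mathcal{X}$ is $\alpha$-FJR (with respect to the losses $\ell_i$) if there is no $S\subseteq\mathcal{N}$ with $|S|\ge n/k$ and $y\in\mathcal{M}$ with $\alpha\,\ell_i(S,y)<\min_{j\in S}\ell_j(\mathcal{X})$ for all $i\in S$. *)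

From mathcomp Require Import all_boot all_order all_algebra.
From mathcomp Require Import reals.
Set Implicit Arguments. Unset Strict Implicit. Unset Printing Implicit Defensive.
Import Order.TTheory GRing.Theory Num.Theory.
Local Open Scope ring_scope.

(* A clustering with k (possibly empty) clusters is given by an assignment
   sigma : N -> 'I_k of agents to clusters and centers x : 'I_k -> M.
   Cluster t is C_t = [set i | sigma i == t]. *)
Definition cluster (N : finType) (k : nat) (sigma : N -> 'I_k) (t : 'I_k)
  : {set N} := [set i | sigma i == t].

Definition clust_loss (R : realType) (N M : finType) (k : nat)
  (l : N -> {set N} -> M -> R) (sigma : N -> 'I_k) (x : 'I_k -> M) (i : N) : R :=
  l i (cluster sigma (sigma i)) (x (sigma i)).

(* alpha-FJR: no S with |S| >= n/k and y with
   alpha * l_i(S,y) < min_{j in S} l_j(X) for all i in S.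
   "< min_{j in S}" is written out as "< l_j(X) for every j in S". *)
Definition FJR (R : realType) (N M : finType) (k : nat) (alpha : R)
  (l : N -> {set N} -> M -> R) (sigma : N -> 'I_k) (x : 'I_k -> M) : Prop :=
  ~ exists (S : {set N}) (y : M),
      ((#|N|%:R / k%:R : R) <= #|S|%:R) /\
      (forall i, i \in S -> forall j, j \in S ->
          alpha * l i S y < clust_loss l sigma x j).

Definition pseudometric (R : realType) (N : finType) (d : N -> N -> R) : Prop :=
  (forall i, d i i = 0) /\ (forall i j, 0 <= d i j) /\
  (forall i j, d i j = d j i) /\ (forall i j h, d i h <= d i j + d j h).

Definition centroid_loss (R : realType) (N M : finType) (dc : N -> M -> R)
  : N -> {set N} -> M -> R := fun i _ x => dc i x.

(* non-centroid loss l_i(C,x) = max_{j in C} dm(i,j) (dm >= 0, so 0 as base) *)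
Definition noncentroid_loss (R : realType) (N M : finType) (dm : N -> N -> R)
  : N -> {set N} -> M -> R := fun i C _ => \big[Num.max/0]_(j in C) dm i j.

From mathcomp Require Import all_boot all_order all_algebra.
From mathcomp Require Import reals.
From mathcomp Require Import lra.
Set Implicit Arguments. Unset Strict Implicit. Unset Printing Implicit Defensive.
Import Order.TTheory GRing.Theory Num.Theory.
Local Open Scope ring_scope.

(* Take four agents (g, b) in two groups g, with k = 2, so that any two agents
   form a large enough coalition.  Agents of different groups are at
   non-centroid distance 1, agents of the same group at distance 0; the center
   (s, t) is at centroid distance 0 from the agents (false, s) and (true, t)
   and at distance 1 from the others.  Centroid FJR forces, for all s and t,
   one of (false, s), (true, t) to be served at distance 0 by its own center,
   otherwise these two agents block with the center (s, t).  Hence both agents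
   of some group g are served, which needs two different centers: the agents
   of g are split over the two clusters.  Every agent of the other group then
   shares a cluster with an agent of g and has non-centroid loss 1, whereas
   together they have loss 0.  All blocking losses are 0. *)

Section BlockingCoalitions.
Variables (R : realType) (N M : finType) (k : nat).

Lemma zero_loss_coalition_not_FJR (alpha : R) (l : N -> {set N} -> M -> R)
    (sigma : N -> 'I_k) (x : 'I_k -> M) (S : {set N}) (y : M) :
  #|N|%:R / k%:R <= #|S|%:R :> R ->
  (forall i, i \in S -> l i S y = 0) ->
  (forall j, j \in S -> 0 < clust_loss l sigma x j) ->
  ~ FJR alpha l sigma x.
Proof.
move=> large zero_loss pos_loss; apply; exists S, y; split=> // i iS j jS.
by rewrite zero_loss // mulr0 pos_loss.
Qed.

Lemma noncentroid_loss_ge (dm : N -> N -> R) i (C : {set N}) (y : M) j :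
  j \in C -> dm i j <= noncentroid_loss dm i C y.
Proof. by move=> jC; rewrite /noncentroid_loss (le_bigmax_cond _ _ jC). Qed.

Lemma noncentroid_loss_eq0 (dm : N -> N -> R) i (C : {set N}) (y : M) :
  (forall j, j \in C -> dm i j = 0) -> noncentroid_loss dm i C y = 0.
Proof.
move=> dm0; rewrite /noncentroid_loss.
by elim/big_rec: _ => // j v /dm0 -> ->; rewrite maxxx.
Qed.

End BlockingCoalitions.

Lemma ord2_onto (f : bool -> 'I_2) : f false != f true -> forall t, exists b, f b = t.
Proof.
move=> f_neq t.
have f_inj : injective f.
  by case=> [] [] // /eqP; rewrite ?(negbTE f_neq) // eq_sym (negbTE f_neq).
have card_le : (#|'I_2| <= #|{: bool}|)%N by rewrite card_bool card_ord.
by have /codomP[b ->] := inj_card_onto f_inj card_le t; exists b.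
Qed.

Lemma cross_cover_full_group (p : bool * bool -> bool) :
  (forall s t, p (false, s) || p (true, t)) -> exists g, p (g, false) && p (g, true).
Proof.
move=> cover; case: (boolP (p (false, false) && p (false, true))); first by exists false.
rewrite negb_and => /orP[] /negbTE p_false; exists true.
- by move: (cover false false) (cover false true); rewrite p_false /= => -> ->.
- by move: (cover true false) (cover true true); rewrite p_false /= => -> ->.
Qed.

Section TwoGroups.
Variable R : realType.

Definition group_dist (i j : bool * bool) : R := (i.1 != j.1)%:R.

Definition serves (m i : bool * bool) : bool := (if i.1 then m.2 else m.1) == i.2.

Definition serve_dist (i m : bool * bool) : R := (~~ serves m i)%:R.

Lemma group_dist_pseudometric : pseudometric group_dist.
Proof.
rewrite /group_dist; split; first by move=> i; rewrite eqxx.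
split; first by move=> i j; rewrite ler0n.
split; first by move=> i j; rewrite eq_sym.
by move=> [[] ?] [[] ?] [[] ?] /=; lra.
Qed.

Lemma serve_dist_ge0 i m : 0 <= serve_dist i m.
Proof. exact: ler0n. Qed.

Lemma serves_pair s t : serves (s, t) (false, s) && serves (s, t) (true, t).
Proof. by rewrite /serves /= !eqxx. Qed.

Lemma serves_one_per_group m g : serves m (g, false) -> ~~ serves m (g, true).
Proof. by rewrite /serves /= => /eqP ->. Qed.

Lemma pair_coalition_large (a b : bool * bool) :
  a != b -> #|{: bool * bool}|%:R / 2%:R <= #|[set a; b]|%:R :> R.
Proof. by move=> ab; rewrite cards2 ab card_prod card_bool /=; lra. Qed.

Variables (sigma : bool * bool -> 'I_2) (x : 'I_2 -> bool * bool).

Definition served i := serves (x (sigma i)) i.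

Lemma centroid_FJR_cross_served alpha :
  FJR alpha (centroid_loss serve_dist) sigma x ->
  forall s t, served (false, s) || served (true, t).
Proof.
move=> fjr s t; apply/negPn/negP => /norP[not_s not_t].
have /andP[serves_s serves_t] := serves_pair s t.
apply: (zero_loss_coalition_not_FJR (S := [set (false, s); (true, t)]) (y := (s, t))) fjr.
- exact: pair_coalition_large.
- move=> i; rewrite !inE => /orP[]/eqP ->;
  by rewrite /centroid_loss /serve_dist ?serves_s ?serves_t.
- move=> j; rewrite !inE => /orP[]/eqP ->; rewrite /clust_loss /centroid_loss /serve_dist;
  by rewrite ?not_s ?not_t ltr01.
Qed.

Lemma served_group_split g :
  served (g, false) -> served (g, true) -> sigma (g, false) != sigma (g, true).
Proof.
move=> served_f served_t; apply/eqP => same_cluster.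
move: served_f served_t; rewrite /served same_cluster.
by move=> /serves_one_per_group /negbTE ->.
Qed.

Lemma noncentroid_loss_other_group_pos g :
  (forall t, exists b, sigma (g, b) = t) ->
  forall b, 0 < clust_loss (noncentroid_loss group_dist) sigma x (~~ g, b).
Proof.
move=> meets b; have [b' same_cluster] := meets (sigma (~~ g, b)).
apply: lt_le_trans (noncentroid_loss_ge _ _ _ (j := (g, b')) _); last first.
  by rewrite /cluster inE same_cluster.
by rewrite /group_dist ltr0n; case: (g).
Qed.

Lemma split_group_not_noncentroid_FJR beta g :
  (forall t, exists b, sigma (g, b) = t) ->
  ~ FJR beta (noncentroid_loss group_dist) sigma x.
Proof.
move=> meets; pose S := [set (~~ g, false); (~~ g, true)].
have in_S_group i : i \in S -> i.1 = ~~ g by rewrite !inE => /orP[]/eqP ->.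
apply: (zero_loss_coalition_not_FJR (S := S) (y := (false, false))).
- by apply: pair_coalition_large; rewrite xpair_eqE eqxx.
- move=> i /in_S_group i_group; apply: noncentroid_loss_eq0 => j /in_S_group j_group.
  by rewrite /group_dist i_group j_group eqxx.
- by move=> j; rewrite !inE => /orP[]/eqP ->; apply: noncentroid_loss_other_group_pos.
Qed.

End TwoGroups.

Theorem mainTheorem13 (R : realType) (alpha beta : R) :
  1 <= alpha -> 1 <= beta ->
  exists (N M : finType) (k : nat) (dm : N -> N -> R) (dc : N -> M -> R),
    [/\ [/\ (0 < #|N|)%N, (0 < #|M|)%N & (0 < k)%N],
        pseudometric dm, (forall i x, 0 <= dc i x) &
        forall (sigma : N -> 'I_k) (x : 'I_k -> M),
          ~ (FJR alpha (centroid_loss dc) sigma x /\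
             FJR beta (@noncentroid_loss R N M dm) sigma x)].
Proof.
move=> _ _; exists (bool * bool)%type, (bool * bool)%type, 2%N, (@group_dist R), (@serve_dist R).
split.
- by rewrite card_prod card_bool.
- exact: group_dist_pseudometric.
- exact: serve_dist_ge0.
move=> sigma x [/centroid_FJR_cross_served cover fjr_noncentroid].
have [g /andP[served_f served_t]] := cross_cover_full_group cover.
apply: split_group_not_noncentroid_FJR fjr_noncentroid.
exact/ord2_onto/(served_group_split served_f served_t).
Qed.
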